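(* Let $\mathcal{P}$ be a profile of unrooted phylogenetic trees whose display graph $G(\mathcal{P})$ is connected. Let $T\in\mathcal{P}$ and suppose $F$ is a minimal cut of $G(\mathcal{P})$ that contains exactly one edge $e$ of $T$. Then the edges of the two subtrees of $T-e$ lie in different connected components of $G(\mathcal{P})-F$ (i.e., no edge of one subtree lies in the same component as an edge of the other subtree).
   Context: A phylogenetic tree is an unrooted tree whose leaves are bijectively labeled (leaves identified with labels; internal vertices have degree at least three). A profile $\mathcal{P}=\{T_1,\dots,T_k\}$ is a finite collection of phylogenetic trees; internal vertices of distinct trees are disjoint, while leaves with the same label are the same vertex. The display graph $G(\mathcal{P})$ has vertex set $\bigcup_i V(T_i)$ and edge set $\bigcup_i E(T_i)$. A cut of a connected graph $G$ is $F\subseteq E(G)$ with $G-F$ (same vertices, edges of $F$ removed) disconnected; it is minimal if no proper subset is a cut. *)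

From mathcomp Require Import all_boot.
Set Implicit Arguments. Unset Strict Implicit. Unset Printing Implicit Defensive.

Section Graphs.
Variable V : finType.

Definition adj (Es : {set {set V}}) : rel V := fun x y => [set x; y] \in Es.

Definition is_graph (Vs : {set V}) (Es : {set {set V}}) : Prop :=
  forall e, e \in Es -> e \subset Vs /\ #|e| = 2.

Definition connected_graph (Vs : {set V}) (Es : {set {set V}}) : Prop :=
  Vs != set0 /\ forall x y, x \in Vs -> y \in Vs -> connect (adj Es) x y.

Definition acyclic (Es : {set {set V}}) : Prop :=
  forall p : seq V, uniq p -> 2 < size p -> ~~ cycle (adj Es) p.

Definition is_tree (Vs : {set V}) (Es : {set {set V}}) : Prop :=
  [/\ is_graph Vs Es, connected_graph Vs Es & acyclic Es].

Definition degree (Es : {set {set V}}) (x : V) : nat := #|[set e in Es | x \in e]|.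

(* leaves of a tree: vertices of degree at most 1 (degree 0 only for the one-vertex tree) *)
Definition leaves (Vs : {set V}) (Es : {set {set V}}) : {set V} :=
  [set x in Vs | degree Es x <= 1].

(* phylogenetic tree: a tree whose internal (non-leaf) vertices have degree >= 3;
   leaves are identified with their labels (they are vertices of V). *)
Definition phylo_tree (Vs : {set V}) (Es : {set {set V}}) : Prop :=
  is_tree Vs Es /\ forall x, x \in Vs -> 1 < degree Es x -> 2 < degree Es x.

(* profile indexed by a finite type I: tree i has vertices VT i and edges ET i;
   distinct trees share only vertices that are leaves in both (same label = same vertex),
   internal vertices of distinct trees are disjoint. *)
Definition profile (I : finType) (VT : I -> {set V}) (ET : I -> {set {set V}}) : Prop :=
  (forall i, phylo_tree (VT i) (ET i)) /\
  (forall i j, i != j -> VT i :&: VT j \subset leaves (VT i) (ET i) :&: leaves (VT j) (ET j)).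

Definition dgV (I : finType) (VT : I -> {set V}) : {set V} := \bigcup_(i : I) VT i.
Definition dgE (I : finType) (ET : I -> {set {set V}}) : {set {set V}} := \bigcup_(i : I) ET i.

Definition is_cut (Vs : {set V}) (Es : {set {set V}}) (F : {set {set V}}) : Prop :=
  F \subset Es /\ ~ connected_graph Vs (Es :\: F).

Definition minimal_cut (Vs : {set V}) (Es : {set {set V}}) (F : {set {set V}}) : Prop :=
  is_cut Vs Es F /\ forall F' : {set {set V}}, F' \proper F -> ~ is_cut Vs Es F'.

End Graphs.

From mathcomp Require Import all_boot.

(* If [x1] and [x2] were joined in G - F, the endpoints [u], [v] of [e] would
   be joined in G - F through the two subtrees of T - e, which avoid F.  Then
   putting [e] back into the graph does not reconnect anything, so G - (F - e)
   is still disconnected, contradicting the minimality of F. *)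

Section MinimalCuts.
Context {V : finType}.
Implicit Types (Vs : {set V}) (Es F : {set {set V}}).

Lemma adj_sym Es : symmetric (adj Es).
Proof. by move=> x y; rewrite /adj setUC. Qed.

Lemma connect_adj_sub {Es1 Es2 x y} :
  Es1 \subset Es2 -> connect (adj Es1) x y -> connect (adj Es2) x y.
Proof.
move=> sE; apply: connect_sub => a b ab.
by apply: connect1; apply: (subsetP sE).
Qed.

Lemma connected_graph_sub Vs Es1 Es2 :
  Es1 \subset Es2 -> connected_graph Vs Es1 -> connected_graph Vs Es2.
Proof.
by move=> sE [ne c]; split=> // x y xV yV; apply: connect_adj_sub sE (c x y xV yV).
Qed.

Lemma connect_adjU1 Es u v x y :
  connect (adj Es) u v ->
  connect (adj ([set u; v] |: Es)) x y -> connect (adj Es) x y.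
Proof.
move=> cuv; apply: connect_sub => a b; rewrite /adj => /setU1P [abe|ab].
  have csym := sym_connect_sym (@adj_sym Es).
  have: (a \in [set u; v]) && (b \in [set u; v]) by rewrite -abe set21 set22.
  by rewrite !inE => /andP [/orP [] /eqP -> /orP [] /eqP ->]; rewrite // csym.
exact: connect1.
Qed.

Lemma connected_graph_setU1 Vs Es u v :
  connect (adj Es) u v ->
  connected_graph Vs ([set u; v] |: Es) -> connected_graph Vs Es.
Proof.
move=> cuv [ne c]; split=> // x y xV yV.
exact: connect_adjU1 cuv (c x y xV yV).
Qed.

Lemma minimal_cut_separates {Vs Es F u v} :
  minimal_cut Vs Es F -> [set u; v] \in F -> ~~ connect (adj (Es :\: F)) u v.
Proof.
move=> [[sFE ncut] minF] eF; apply/negP => cuv.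
apply: (minF (F :\ [set u; v])); first by rewrite properD1.
split; first exact: subset_trans (subsetDl _ _) sFE.
move=> conn; apply: ncut; apply: connected_graph_setU1 cuv _.
apply: connected_graph_sub conn; apply/subsetP => f.
rewrite !inE => /andP [fNF fE]; rewrite fE andbT.
by case: eqP fNF => //= _ ->.
Qed.

End MinimalCuts.

Theorem lemma7 (V I : finType) (VT : I -> {set V}) (ET : I -> {set {set V}})
  (F : {set {set V}}) (i : I) (u v : V) :
  profile VT ET ->
  connected_graph (dgV VT) (dgE ET) ->
  minimal_cut (dgV VT) (dgE ET) F ->
  F :&: ET i = [set [set u; v]] ->
  forall f1 f2 x1 x2,
    f1 \in ET i :\ [set u; v] -> f2 \in ET i :\ [set u; v] ->
    (* f1 lies in the subtree of T - e containing u, f2 in the one containing v *)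
    (forall y, y \in f1 -> connect (adj (ET i :\ [set u; v])) u y) ->
    (forall y, y \in f2 -> connect (adj (ET i :\ [set u; v])) v y) ->
    x1 \in f1 -> x2 \in f2 ->
    ~~ connect (adj (dgE ET :\: F)) x1 x2.
Proof.
move=> _ _ minF FTi f1 f2 x1 x2 _ _ h1 h2 x1f x2f.
have eF : [set u; v] \in F by have := set11 [set u; v]; rewrite -FTi => /setIP [].
have sTG : ET i :\ [set u; v] \subset dgE ET :\: F.
  apply/subsetP => f /setD1P [fe fTi]; rewrite inE.
  apply/andP; split; last by apply/bigcupP; exists i.
  by apply: contra fe => fF; rewrite -in_set1 -FTi inE fF.
have cu := connect_adj_sub sTG (h1 _ x1f).
have cv := connect_adj_sub sTG (h2 _ x2f).
move: (minimal_cut_separates minF eF); apply: contraNN => c12.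
apply: connect_trans cu (connect_trans c12 _).
by rewrite (sym_connect_sym (@adj_sym _ _)).
Qed.
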